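(* Consider Algorithm ProxSVRG (described in the context) with minibatch size $b\le n$, epoch length $m\ge 1$, a number of inner iterations $T$ that is a multiple of $m$, and step size $\eta=\rho/L$, where $0<\rho<1/2$ satisfies $$\frac{4\rho^2 m^2}{b}+\rho\le 1 .$$ Then the output $x_a$ of the algorithm satisfies $$\mathbb E\big[\|\mathcal G_\eta(x_a)\|^2\big]\le \frac{2L\,(F(x^0)-F(x^* ))}{\rho(1-2\rho)\,T},$$ where $x^*$ is an optimal solution of $\min_x F(x)$.
   Context: Setting: Let $n,d\ge 1$ be integers and $[n]=\{1,\dots,n\}$. Let $f_1,\dots,f_n:\mathbb R^d\to\mathbb R$ be differentiable (possibly nonconvex) functions, each $L$-smooth for some $L>0$, i.e. $\|\nabla f_i(x)-\nabla f_i(y)\|\le L\|x-y\|$ for all $x,y\in\mathbb R^d$ and $i\in[n]$. Let $f=\frac1n\sum_{i=1}^n f_i$. Let $h:\mathbb R^d\to\mathbb R\cup\{+\infty\}$ be proper, lower semicontinuous and convex, with closed domain. Let $F=f+h$, and let $x^*$ be a global minimizer of $F$ on $\mathbb R^d$ (assumed to exist). For $\eta>0$, $\mathrm{prox}_{\eta h}(x):=\arg\min_{y\in\mathbb R^d}\big(h(y)+\frac1{2\eta}\|y-x\|^2\big)$, and the gradient mapping is $\mathcal G_\eta(x):=\frac1\eta\big[x-\mathrm{prox}_{\eta h}(x-\eta\nabla f(x))\big]$. Algorithm ProxSVRG$(x^0,T,m,b,\eta)$: Given $x^0\in\mathbb R^d$, positive integers $T,m,b$ and $\eta>0$, let $S=\lceil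 T/m\rceil$ and set $\tilde x^0=x^0_m=x^0$. For $s=0,\dots,S-1$: set $x^{s+1}_0=x^s_m$ and $g^{s+1}=\frac1n\sum_{i=1}^n\nabla f_i(\tilde x^s)$; for $t=0,\dots,m-1$: draw a multiset $I_t$ of $b$ indices, each drawn independently and uniformly at random from $[n]$ (with replacement, independently of all previous draws), set $v^{s+1}_t=\frac1b\sum_{i\in I_t}\big(\nabla f_i(x^{s+1}_t)-\nabla f_i(\tilde x^s)\big)+g^{s+1}$ and $x^{s+1}_{t+1}=\mathrm{prox}_{\eta h}(x^{s+1}_t-\eta v^{s+1}_t)$; after the inner loop set $\tilde x^{s+1}=x^{s+1}_m$. The output $x_a$ is chosen uniformly at random from $\{x^{s+1}_t: 0\le t\le m-1,\ 0\le s\le S-1\}$. Expectations are over all randomness of the algorithm. *)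

From Stdlib Require Import Reals List.
From mathcomp Require Import ssreflect ssrbool ssrfun eqtype ssrnat seq fintype.
Open Scope R_scope.

Definition Vec (d : nat) := 'I_d -> R.

Definition sumI (d : nat) (F : 'I_d -> R) : R :=
  List.fold_right Rplus 0 (List.map F (enum 'I_d)).

Definition vadd {d} (x y : Vec d) : Vec d := fun i => x i + y i.
Definition vsub {d} (x y : Vec d) : Vec d := fun i => x i - y i.
Definition vscale {d} (a : R) (x : Vec d) : Vec d := fun i => a * x i.
Definition vzero {d} : Vec d := fun _ => 0.
Definition dot {d} (x y : Vec d) : R := sumI d (fun i => x i * y i).
Definition norm {d} (x : Vec d) : R := sqrt (dot x x).

(* sum over k = 0 .. N-1 (exactly N terms) *)
Fixpoint sumN (N : nat) (F : nat -> R) : R :=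
  match N with O => 0 | S k => sumN k F + F k end.

Definition is_gradient {d} (f : Vec d -> R) (g : Vec d -> Vec d) : Prop :=
  forall x eps, 0 < eps -> exists delta, 0 < delta /\
    forall hv : Vec d, norm hv < delta ->
      Rabs (f (vadd x hv) - f x - dot (g x) hv) <= eps * norm hv.

Definition lipschitz_grad {d} (L : R) (g : Vec d -> Vec d) : Prop :=
  forall x y, norm (vsub (g x) (g y)) <= L * norm (vsub x y).

(* ---------- extended-valued h : R^d -> R U {+oo}  (None = +oo) ---------- *)
Definition proper_fn {d} (h : Vec d -> option R) : Prop := exists x, h x <> None.

Definition ext_gt (c : R) (v : option R) : Prop :=
  match v with None => True | Some a => c < a end.

Definition lsc_fn {d} (h : Vec d -> option R) : Prop :=
  forall x c, ext_gt c (h x) -> exists delta, 0 < delta /\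
    forall y, norm (vsub y x) < delta -> ext_gt c (h y).

Definition convex_fn {d} (h : Vec d -> option R) : Prop :=
  forall x y a b t, 0 <= t <= 1 -> h x = Some a -> h y = Some b ->
    exists v, h (vadd (vscale t x) (vscale (1 - t) y)) = Some v /\
              v <= t * a + (1 - t) * b.

Definition closed_dom {d} (h : Vec d -> option R) : Prop :=
  forall x, (forall eps, 0 < eps -> exists y, h y <> None /\ norm (vsub y x) < eps) ->
    h x <> None.

Definition is_prox {d} (h : Vec d -> option R) (eta : R) (p : Vec d -> Vec d) : Prop :=
  forall x, exists hp, h (p x) = Some hp /\
    forall y v, h y = Some v ->
      hp + (norm (vsub (p x) x))^2 / (2 * eta) <= v + (norm (vsub y x))^2 / (2 * eta).

Definition favg {d} (n : nat) (fs : nat -> Vec d -> R) (x : Vec d) : R :=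
  / INR n * sumN n (fun i => fs i x).

Definition gavg {d} (n : nat) (gs : nat -> Vec d -> Vec d) (x : Vec d) : Vec d :=
  fun j => / INR n * sumN n (fun i => gs i x j).

Definition grad_map {d} (n : nat) (gs : nat -> Vec d -> Vec d) (p : Vec d -> Vec d)
  (eta : R) (x : Vec d) : Vec d :=
  vscale (/ eta) (vsub x (p (vsub x (vscale eta (gavg n gs x))))).

(* one inner step with minibatch I (a list of indices in [0,n), with repetition) *)
Definition svrg_step {d} (n b : nat) (gs : nat -> Vec d -> Vec d) (p : Vec d -> Vec d)
  (eta : R) (xt xtl gfull : Vec d) (batch : list nat) : Vec d :=
  let v : Vec d := fun j =>
    / INR b * List.fold_right Rplus 0 (List.map (fun i => gs i xt j - gs i xtl j) batch)
    + gfull j in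
  p (vsub xt (vscale eta v)).

(* inner loop: returns the iterates x_0,...,x_{m-1} and x_m *)
Fixpoint inner_run {d} (n b : nat) (gs : nat -> Vec d -> Vec d) (p : Vec d -> Vec d)
  (eta : R) (xt xtl gfull : Vec d) (bs : list (list nat)) : list (Vec d) * Vec d :=
  match bs with
  | nil => (nil, xt)
  | batch :: bs' =>
      let r := inner_run n b gs p eta (svrg_step n b gs p eta xt xtl gfull batch) xtl gfull bs' in
      (xt :: fst r, snd r)
  end.

(* outer loop: returns all iterates x^{s+1}_t, 0<=s<S, 0<=t<m *)
Fixpoint outer_run {d} (n b : nat) (gs : nat -> Vec d -> Vec d) (p : Vec d -> Vec d)
  (eta : R) (xtl : Vec d) (es : list (list (list nat))) : list (Vec d) :=
  match es with
  | nil => nil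
  | e :: es' =>
      let r := inner_run n b gs p eta xtl xtl (gavg n gs xtl) e in
      fst r ++ outer_run n b gs p eta (snd r) es'
  end.

Fixpoint chunk {A} (k c : nat) (l : list A) : list (list A) :=
  match c with
  | O => nil
  | S c' => List.firstn k l :: chunk k c' (List.skipn k l)
  end.

(* expectation of Phi over a list of N indices drawn i.i.d. uniformly from {0,...,n-1} *)
Fixpoint avg_draws (n N : nat) (Phi : list nat -> R) : R :=
  match N with
  | O => Phi nil
  | S k => / INR n * sumN n (fun i => avg_draws n k (fun l => Phi (i :: l)))
  end.

Definition num_epochs (T m : nat) : nat := Nat.div (T + m - 1) m.

(* E || G_eta(x_a) ||^2, x_a uniform among the S*m iterates x^{s+1}_t *)
Definition expected_sq_gradmap {d} (n b m T : nat) (gs : nat -> Vec d -> Vec d)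
  (p : Vec d -> Vec d) (eta : R) (x0 : Vec d) : R :=
  let Sn := num_epochs T m in
  avg_draws n (Sn * m * b) (fun l =>
    let iters := outer_run n b gs p eta x0 (chunk m Sn (chunk b (Sn * m) l)) in
    / INR (Sn * m) *
      List.fold_right Rplus 0
        (List.map (fun x => (norm (grad_map n gs p eta x))^2) iters)).

From Stdlib Require Import Reals List Lra Lia FunctionalExtensionality.
From mathcomp Require Import ssreflect ssrbool ssrfun eqtype ssrnat seq fintype zify.
Open Scope R_scope.

(* A Lyapunov argument within each epoch.  With snapshot [w] and [k] inner steps left, put
   R_k(x) = F(x) + c_k |x - w|^2 with c_k = rho L k / b.  One ProxSVRG step from [x]
   decreases R in expectation by rho (1 - 2 rho) / (2 L) |G_eta(x)|^2: the proximal step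
   pays eta/2 times the minibatch variance, at most L^2 |x - w|^2 / b, and the condition
   4 rho^2 m^2 / b + rho <= 1 keeps c_k small enough to absorb the drift of |x - w|^2.
   Each epoch starts at x = w and ends with c_0 = 0, so the decreases telescope over all
   epochs to at most F(x^0) - min F. *)

Definition lsum {A} (F : A -> R) (s : list A) : R := List.fold_right Rplus 0 (List.map F s).

Section ListSum.
Context {A : Type}.
Implicit Types (F G : A -> R) (s : list A).

Lemma lsum_add F G s : lsum (fun i => F i + G i) s = lsum F s + lsum G s.
Proof. by rewrite /lsum; elim: s => [|a s IH] /=; rewrite ?IH; ring. Qed.

Lemma lsum_scale c F s : lsum (fun i => c * F i) s = c * lsum F s.
Proof. by rewrite /lsum; elim: s => [|a s IH] /=; rewrite ?IH; ring. Qed.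

Lemma lsum_ext F G s : (forall i, F i = G i) -> lsum F s = lsum G s.
Proof. by move=> FG; rewrite /lsum (List.map_ext _ _ FG). Qed.

Lemma lsum_le F G s : (forall i, F i <= G i) -> lsum F s <= lsum G s.
Proof. by move=> FG; rewrite /lsum; elim: s => [|a s IH] /=; [lra|apply: Rplus_le_compat]. Qed.

Lemma lsum_ge0 F s : (forall i, 0 <= F i) -> 0 <= lsum F s.
Proof. by move=> F0; rewrite /lsum; elim: s => [|a s IH] /=; [lra|have := F0 a; lra]. Qed.

Lemma lsum_const c s : lsum (fun _ => c) s = INR (length s) * c.
Proof.
rewrite /lsum; elim: s => [|a s IH]; first by rewrite /=; ring.
by cbn [List.map List.fold_right length]; rewrite S_INR IH; ring.
Qed.

Lemma lsum_app F s1 s2 : lsum F (s1 ++ s2)%list = lsum F s1 + lsum F s2.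
Proof. by rewrite /lsum; elim: s1 => [|a s1 IH] /=; rewrite ?IH; ring. Qed.

End ListSum.

Lemma chunk_cons {A} k c (l1 l2 : list A) :
  length l1 = k -> chunk k c.+1 (l1 ++ l2)%list = l1 :: chunk k c l2.
Proof.
by move=> <-; rewrite /= firstn_app skipn_app firstn_all skipn_all Nat.sub_diag app_nil_r.
Qed.

Lemma length_chunk {A} k c (l : list A) : length (chunk k c l) = c.
Proof. by elim: c l => [|c IH] l //=; rewrite IH. Qed.

Lemma chunk_app {A} k c1 c2 (l1 l2 : list A) :
  length l1 = (c1 * k)%N ->
  chunk k (c1 + c2) (l1 ++ l2)%list = (chunk k c1 l1 ++ chunk k c2 l2)%list.
Proof.
elim: c1 l1 => [|c1 IH] l1 l1_len; first by case: l1 l1_len.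
have k_le : (k <= length l1)%coq_nat by rewrite l1_len mulSn; lia.
rewrite -(List.firstn_skipn k l1) -List.app_assoc addSn !chunk_cons ?IH ?List.firstn_length_le //.
by rewrite List.length_skipn l1_len mulSn; lia.
Qed.

Lemma num_epochs_mul k m : (0 < m)%N -> num_epochs (k * m) m = k.
Proof.
by move=> m_gt0; rewrite /num_epochs; symmetry; apply: (Nat.div_unique _ _ _ (m - 1)); lia.
Qed.

Lemma sumI_add d (F G : 'I_d -> R) : sumI d (fun i => F i + G i) = sumI d F + sumI d G.
Proof. exact: lsum_add. Qed.

Lemma sumI_scale d c (F : 'I_d -> R) : sumI d (fun i => c * F i) = c * sumI d F.
Proof. exact: lsum_scale. Qed.

Lemma sumI_ext d (F G : 'I_d -> R) : (forall i, F i = G i) -> sumI d F = sumI d G.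
Proof. exact: lsum_ext. Qed.

Lemma sumI_ge0 d (F : 'I_d -> R) : (forall i, 0 <= F i) -> 0 <= sumI d F.
Proof. exact: lsum_ge0. Qed.

Lemma sumI_zero d : sumI d (fun _ => 0) = 0.
Proof. by rewrite /sumI -/(lsum _ _) lsum_const Rmult_0_r. Qed.

Lemma sumI_le d (F G : 'I_d -> R) : (forall i, F i <= G i) -> sumI d F <= sumI d G.
Proof. exact: lsum_le. Qed.

Section Vectors.
Context {d : nat}.
Implicit Types (u v w : Vec d).

Lemma vec_eq u v : (forall j, u j = v j) -> u = v.
Proof. exact: functional_extensionality. Qed.

Definition nsq u : R := dot u u.

Lemma dot_comm u v : dot u v = dot v u.
Proof. by apply: sumI_ext => j; rewrite Rmult_comm. Qed.

Lemma dot_addl u v w : dot (vadd u v) w = dot u w + dot v w.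
Proof. rewrite /dot -sumI_add; apply: sumI_ext => j; rewrite /vadd; ring. Qed.

Lemma dot_scalel c u v : dot (vscale c u) v = c * dot u v.
Proof. rewrite /dot -sumI_scale; apply: sumI_ext => j; rewrite /vscale; ring. Qed.

Lemma dot_subl u v w : dot (vsub u v) w = dot u w - dot v w.
Proof.
have -> : vsub u v = vadd u (vscale (-1) v) by apply: vec_eq => j; rewrite /vsub /vadd /vscale; ring.
rewrite dot_addl dot_scalel; ring.
Qed.

Lemma dot_addr u v w : dot u (vadd v w) = dot u v + dot u w.
Proof. by rewrite dot_comm dot_addl !(dot_comm _ u). Qed.

Lemma dot_scaler c u v : dot u (vscale c v) = c * dot u v.
Proof. by rewrite dot_comm dot_scalel dot_comm. Qed.

Lemma dot_subr u v w : dot u (vsub v w) = dot u v - dot u w.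
Proof. by rewrite dot_comm dot_subl !(dot_comm _ u). Qed.

Lemma nsq_ge0 u : 0 <= nsq u.
Proof. apply: sumI_ge0 => j; nra. Qed.

Lemma norm_sq u : norm u ^ 2 = nsq u.
Proof. exact/pow2_sqrt/nsq_ge0. Qed.

Lemma nsq_add u v : nsq (vadd u v) = nsq u + 2 * dot u v + nsq v.
Proof. rewrite /nsq dot_addl !dot_addr (dot_comm v u); ring. Qed.

Lemma nsq_sub u v : nsq (vsub u v) = nsq u - 2 * dot u v + nsq v.
Proof. rewrite /nsq dot_subl !dot_subr (dot_comm v u); ring. Qed.

Lemma nsq_scale c u : nsq (vscale c u) = c ^ 2 * nsq u.
Proof. rewrite /nsq dot_scalel dot_scaler; ring. Qed.

Lemma nsq_subC u v : nsq (vsub u v) = nsq (vsub v u).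
Proof. rewrite !nsq_sub (dot_comm v u); ring. Qed.

Lemma norm_scale c u : norm (vscale c u) = Rabs c * norm u.
Proof.
rewrite /norm -/(nsq _) -/(nsq u) nsq_scale sqrt_mult_alt; last by nra.
by rewrite -Rsqr_pow2 sqrt_Rsqr_abs.
Qed.

Lemma dot_young c u v : 0 < c -> 2 * dot u v <= c * nsq u + nsq v / c.
Proof.
move=> c0; have := nsq_ge0 (vsub (vscale c u) v).
rewrite nsq_sub nsq_scale dot_scalel => H.
have -> : nsq v / c = / c * nsq v by rewrite /Rdiv Rmult_comm.
apply: (Rmult_le_reg_l c) => //.
rewrite Rmult_plus_distr_l -(Rmult_assoc c (/ c)) Rinv_r; [nra|lra].
Qed.

Lemma dot_le_of_nsq_le k u v : 0 < k -> nsq u <= k ^ 2 * nsq v -> dot u v <= k * nsq v.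
Proof.
move=> k0 uv; have := dot_young (/ k) u v (Rinv_0_lt_compat _ k0).
rewrite /Rdiv Rinv_inv => H.
have : / k * nsq u <= k * nsq v.
  by apply: (Rmult_le_reg_l k) => //; rewrite -Rmult_assoc Rinv_r; nra.
lra.
Qed.

Lemma nsq_add_le c u v : 0 < c -> nsq (vadd u v) <= (1 + c) * nsq u + (1 + / c) * nsq v.
Proof. move=> c0; have := dot_young c u v c0; rewrite nsq_add /Rdiv; lra. Qed.

End Vectors.

Lemma sumN_add N (F G : nat -> R) : sumN N (fun i => F i + G i) = sumN N F + sumN N G.
Proof. by elim: N => [|N IH] /=; rewrite ?IH; ring. Qed.

Lemma sumN_scale N c (F : nat -> R) : sumN N (fun i => c * F i) = c * sumN N F.
Proof. by elim: N => [|N IH] /=; rewrite ?IH; ring. Qed.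

Lemma sumN_le N (F G : nat -> R) :
  (forall i, (i < N)%coq_nat -> F i <= G i) -> sumN N F <= sumN N G.
Proof.
elim: N => [|N IH] FG /=; first lra.
apply: Rplus_le_compat; [apply: IH => i Hi|]; apply: FG; lia.
Qed.

Lemma sumN_ext N (F G : nat -> R) :
  (forall i, (i < N)%coq_nat -> F i = G i) -> sumN N F = sumN N G.
Proof. move=> FG; apply: Rle_antisym; apply: sumN_le => i /FG ->; lra. Qed.

Lemma sumN_const N c : sumN N (fun _ => c) = INR N * c.
Proof. by elim: N => [|N IH]; rewrite ?S_INR /= ?IH; ring. Qed.

Lemma sumN_sumI N d (F : nat -> 'I_d -> R) :
  sumN N (fun i => sumI d (F i)) = sumI d (fun j => sumN N (fun i => F i j)).
Proof. by elim: N => [|N IH]; rewrite /= ?IH ?sumI_add ?sumI_zero. Qed.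

Section Averages.
Variable n : nat.
Hypothesis n_gt0 : (0 < n)%coq_nat.

Definition mean (F : nat -> R) : R := / INR n * sumN n F.

Let INR_n_gt0 : 0 < INR n. Proof. exact: lt_0_INR. Qed.

Lemma mean_add F G : mean (fun i => F i + G i) = mean F + mean G.
Proof. rewrite /mean sumN_add; ring. Qed.

Lemma mean_scale c F : mean (fun i => c * F i) = c * mean F.
Proof. rewrite /mean sumN_scale; ring. Qed.

Lemma mean_const c : mean (fun _ => c) = c.
Proof. rewrite /mean sumN_const; field; lra. Qed.

Lemma mean_le F G : (forall i, (i < n)%coq_nat -> F i <= G i) -> mean F <= mean G.
Proof. move=> FG; apply: Rmult_le_compat_l; [exact/Rlt_le/Rinv_0_lt_compat|exact: sumN_le]. Qed.

Lemma mean_ext F G : (forall i, (i < n)%coq_nat -> F i = G i) -> mean F = mean G.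
Proof. by move=> FG; rewrite /mean (sumN_ext _ _ _ FG). Qed.

Lemma mean_sub F G : mean (fun i => F i - G i) = mean F - mean G.
Proof.
rewrite (mean_ext _ (fun i => F i + (-1) * G i)) => [|i _]; last ring.
by rewrite mean_add mean_scale; ring.
Qed.

Lemma mean_sumI d (F : nat -> 'I_d -> R) :
  mean (fun i => sumI d (F i)) = sumI d (fun j => mean (fun i => F i j)).
Proof. by rewrite /mean sumN_sumI -sumI_scale. Qed.

Lemma mean_sq_shift w F :
  mean (fun i => (w + F i) ^ 2) = w ^ 2 + 2 * w * mean F + mean (fun i => F i ^ 2).
Proof.
rewrite -mean_scale -(mean_const (w ^ 2)) -!mean_add.
by apply: mean_ext => i _; ring.
Qed.

Lemma mean_sq_centered_le F : mean (fun i => (F i - mean F) ^ 2) <= mean (fun i => F i ^ 2).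
Proof.
have -> : mean (fun i => (F i - mean F) ^ 2) = mean (fun i => (- mean F + F i) ^ 2).
  by apply: mean_ext => i _; ring.
rewrite mean_sq_shift; nra.
Qed.

Lemma avg_draws_S N Phi :
  avg_draws n N.+1 Phi = mean (fun i => avg_draws n N (fun l => Phi (i :: l))).
Proof. by []. Qed.

Lemma avg_draws_le N Phi Psi :
  (forall l, length l = N -> Phi l <= Psi l) -> avg_draws n N Phi <= avg_draws n N Psi.
Proof.
elim: N Phi Psi => [|N IH] Phi Psi le_PhiPsi; first exact: le_PhiPsi.
rewrite !avg_draws_S; apply: mean_le => i _; apply: IH => l Hl.
by apply: le_PhiPsi; rewrite /= Hl.
Qed.

Lemma avg_draws_ext N Phi Psi :
  (forall l, length l = N -> Phi l = Psi l) -> avg_draws n N Phi = avg_draws n N Psi.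
Proof. by move=> E; apply: Rle_antisym; apply: avg_draws_le => l /E ->; lra. Qed.

Lemma avg_draws_add N Phi Psi :
  avg_draws n N (fun l => Phi l + Psi l) = avg_draws n N Phi + avg_draws n N Psi.
Proof.
elim: N Phi Psi => [|N IH] Phi Psi //.
by rewrite !avg_draws_S -mean_add; apply: mean_ext => i _; apply: IH.
Qed.

Lemma avg_draws_scale N c Phi : avg_draws n N (fun l => c * Phi l) = c * avg_draws n N Phi.
Proof.
elim: N Phi => [|N IH] Phi //.
by rewrite !avg_draws_S -mean_scale; apply: mean_ext => i _; apply: IH.
Qed.

Lemma avg_draws_const N c : avg_draws n N (fun _ => c) = c.
Proof.
elim: N => [|N IH] //.
by rewrite avg_draws_S -[RHS]mean_const; apply: mean_ext => i _; apply: IH.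
Qed.

Lemma avg_draws_app N1 N2 Phi :
  avg_draws n (N1 + N2) Phi =
  avg_draws n N1 (fun l1 => avg_draws n N2 (fun l2 => Phi (l1 ++ l2)%list)).
Proof.
elim: N1 Phi => [|N1 IH] Phi //.
by rewrite addSn !avg_draws_S; apply: mean_ext => i _; apply: IH.
Qed.

Lemma avg_draws_sumI d N (F : list nat -> 'I_d -> R) :
  avg_draws n N (fun l => sumI d (F l)) = sumI d (fun j => avg_draws n N (fun l => F l j)).
Proof.
rewrite /sumI; elim: (enum 'I_d) => [|j s IH] /=; first exact: avg_draws_const.
by rewrite avg_draws_add IH.
Qed.

Lemma avg_draws_sq_sum_centered (zeta : nat -> R) : mean zeta = 0 ->
  forall N w, avg_draws n N (fun I => (w + lsum zeta I) ^ 2)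
              = w ^ 2 + INR N * mean (fun i => zeta i ^ 2).
Proof.
move=> zeta0; elim=> [|N IH] w; first by rewrite /= /lsum /=; ring.
rewrite avg_draws_S.
have -> : mean (fun i => avg_draws n N (fun I => (w + lsum zeta (i :: I)) ^ 2))
        = mean (fun i => (w + zeta i) ^ 2 + INR N * mean (fun i => zeta i ^ 2)).
  apply: mean_ext => i _; rewrite -IH; apply: avg_draws_ext => I _.
  by rewrite /lsum /=; ring.
rewrite mean_add mean_const mean_sq_shift zeta0 S_INR; ring.
Qed.

Lemma minibatch_sq_error (a : nat -> R) b : (0 < b)%coq_nat ->
  avg_draws n b (fun I => (mean a - / INR b * lsum a I) ^ 2) <= / INR b * mean (fun i => a i ^ 2).
Proof.
move=> b_gt0; have b_pos : 0 < INR b by apply: lt_0_INR.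
set zeta := fun i => a i - mean a.
have zeta0 : mean zeta = 0 by rewrite /zeta mean_sub mean_const; ring.
rewrite (avg_draws_ext b _ (fun I => (/ INR b) ^ 2 * (0 + lsum zeta I) ^ 2)); last first.
  move=> I I_b.
  rewrite (lsum_ext zeta (fun i => a i + (-1) * mean a)) => [|i]; last by rewrite /zeta; ring.
  by rewrite lsum_add lsum_const I_b; field; lra.
rewrite avg_draws_scale avg_draws_sq_sum_centered //.
have := mean_sq_centered_le a; rewrite -/zeta.
have -> : (/ INR b) ^ 2 * (0 ^ 2 + INR b * mean (fun i => zeta i ^ 2))
          = / INR b * mean (fun i => zeta i ^ 2) by field; lra.
by move=> H; apply: Rmult_le_compat_l; [exact/Rlt_le/Rinv_0_lt_compat|].
Qed.

Lemma minibatch_nsq_error {d} (a : nat -> Vec d) b : (0 < b)%coq_nat ->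
  avg_draws n b (fun I => nsq (fun j => mean (fun i => a i j) - / INR b * lsum (fun i => a i j) I))
  <= / INR b * mean (fun i => nsq (a i)).
Proof.
move=> b_gt0; rewrite /nsq /dot avg_draws_sumI mean_sumI -sumI_scale; apply: sumI_le => j.
rewrite (avg_draws_ext _ _ (fun I => (mean (fun i => a i j) - / INR b * lsum (fun i => a i j) I) ^ 2)).
  rewrite (mean_ext (fun i => a i j * a i j) (fun i => a i j ^ 2)); first exact: minibatch_sq_error.
  by move=> i _; ring.
by move=> I _; ring.
Qed.

End Averages.

Section Smoothness.
Context {d : nat}.
Implicit Types (f : Vec d -> R) (g : Vec d -> Vec d) (x y v : Vec d).

Lemma nsq_lipschitz L g x y : 0 <= L -> lipschitz_grad L g ->
  nsq (vsub (g x) (g y)) <= L ^ 2 * nsq (vsub x y).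
Proof.
move=> L0 /(_ x y) Hg; rewrite -!norm_sq -Rpow_mult_distr.
by apply: pow_incr; split; [exact: sqrt_pos|].
Qed.

Lemma derivable_pt_lim_line f g x v t : is_gradient f g ->
  derivable_pt_lim (fun s => f (vadd x (vscale s v))) t (dot (g (vadd x (vscale t v))) v).
Proof.
move=> Hg eps eps0; set z := vadd x (vscale t v); set nv := norm v.
have nv0 : 0 <= nv by exact: sqrt_pos.
have [delta [delta0 Hdelta]] := Hg z (eps / (2 * (nv + 1))) ltac:(apply: Rdiv_lt_0_compat; lra).
have delta'0 : 0 < delta / (nv + 1) by apply: Rdiv_lt_0_compat; lra.
exists (mkposreal _ delta'0) => hh hh0 /= hh_small.
have hh_pos : 0 < Rabs hh by exact: Rabs_pos_lt.
have -> : vadd x (vscale (t + hh) v) = vadd z (vscale hh v).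
  by apply: vec_eq => j; rewrite /z /vadd /vscale; ring.
have hv_small : norm (vscale hh v) < delta.
  apply (Rmult_lt_compat_r (nv + 1)) in hh_small; last lra.
  rewrite /Rdiv Rmult_assoc Rinv_l in hh_small; last lra.
  rewrite norm_scale -/nv; nra.
have := Hdelta _ hv_small; rewrite dot_scaler norm_scale -/nv => H.
have -> : (f (vadd z (vscale hh v)) - f z) / hh - dot (g z) v
          = (f (vadd z (vscale hh v)) - f z - hh * dot (g z) v) * / hh by field.
rewrite Rabs_mult Rabs_inv; apply: (Rmult_lt_reg_r (Rabs hh)) => //.
rewrite Rmult_assoc Rinv_l; last lra.
rewrite Rmult_1_r; apply: Rle_lt_trans H _.
have : eps / (2 * (nv + 1)) * nv < eps.
  apply: (Rmult_lt_reg_r (2 * (nv + 1))); first lra.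
  by field_simplify; [nra|lra].
nra.
Qed.

(* The descent lemma, by the mean value theorem applied to
   [s |-> f (x + s v) - s <g x, v> - s^2 L |v|^2 / 2], whose derivative is [<= 0] on [(0, 1)]. *)
Lemma smooth_upper_bound L f g x y : 0 < L -> is_gradient f g -> lipschitz_grad L g ->
  f y <= f x + dot (g x) (vsub y x) + L / 2 * nsq (vsub y x).
Proof.
move=> L0 Hf Hg; set v := vsub y x; set D := dot (g x) v; set N := nsq v.
pose id := Ranalysis1.id.
pose psi := ((fun s => f (vadd x (vscale s v))) - mult_real_fct D id
             - mult_real_fct (L / 2 * N) (id * id))%F.
pose dpsi s := dot (g (vadd x (vscale s v))) v - D * 1 - L / 2 * N * (1 * id s + id s * 1).
have psi' : forall s, derivable_pt_lim psi s (dpsi s).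
  move=> s; apply: derivable_pt_lim_minus; first apply: derivable_pt_lim_minus.
  - exact: derivable_pt_lim_line.
  - exact/derivable_pt_lim_scal/derivable_pt_lim_id.
  - by apply/derivable_pt_lim_scal/derivable_pt_lim_mult; apply: derivable_pt_lim_id.
have [c [Hc c01]] := MVT_cor1 psi 0 1 (fun s => exist _ (dpsi s) (psi' s)) Rlt_0_1.
have dpsi_c : dpsi c <= 0.
  have : dot (vsub (g (vadd x (vscale c v))) (g x)) v <= L * c * N.
    apply: dot_le_of_nsq_le; first nra.
    apply: Rle_trans (nsq_lipschitz _ _ _ _ (Rlt_le _ _ L0) Hg) _.
    have -> : vsub (vadd x (vscale c v)) x = vscale c v.
      by apply: vec_eq => j; rewrite /vsub /vadd /vscale; ring.
    rewrite nsq_scale; lra.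
  rewrite dot_subl /dpsi /id /Ranalysis1.id -/D; lra.
move: Hc; change (derive_pt _ _ _) with (dpsi c).
rewrite /psi /minus_fct /mult_real_fct /mult_fct /id /Ranalysis1.id.
have -> : vadd x (vscale 0 v) = x by apply: vec_eq => j; rewrite /vadd /vscale; ring.
have -> : vadd x (vscale 1 v) = y by apply: vec_eq => j; rewrite /vadd /vscale /v /vsub; ring.
lra.
Qed.

End Smoothness.

Lemma le0_of_forall_small a c : 0 <= c -> (forall t, 0 < t <= 1 -> a <= t * c) -> a <= 0.
Proof.
move=> c0 small; apply: Rnot_lt_le => a0.
set t := Rmin 1 (a / (2 * (c + 1))).
have t0 : 0 < t by apply: Rmin_glb_lt; [lra|apply: Rdiv_lt_0_compat; lra].
have tc : t * c < a.
  have : t * (2 * (c + 1)) <= a.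
    by apply: Rle_trans (Rmult_le_compat_r _ _ _ _ (Rmin_r _ _)) _; [lra|right; field; lra].
  nra.
have := small t (conj t0 (Rmin_l _ _)); lra.
Qed.

(* The value of [h] on its domain; the default [0] outside it is never used. *)
Definition hval {d} (h : Vec d -> option R) (z : Vec d) : R :=
  match h z with Some a => a | None => 0 end.

Section Prox.
Context {d : nat}.
Context {h : Vec d -> option R} {eta : R} {p : Vec d -> Vec d}.
Hypotheses (eta_gt0 : 0 < eta) (h_convex : convex_fn h) (p_prox : is_prox h eta p).

Lemma prox_in_dom u : h (p u) = Some (hval h (p u)).
Proof. by have [hp [hpu _]] := p_prox u; rewrite /hval hpu. Qed.

(* The optimality condition [(u - p u) / eta \in \partial h (p u)], tested at [z]. *)
Lemma prox_variational u {z hz} : h z = Some hz ->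
  hval h (p u) <= hz + dot (vsub (p u) u) (vsub z (p u)) / eta.
Proof.
move=> hz_def; have [hp [hpu p_min]] := p_prox u; rewrite /hval hpu.
set y := p u in hpu p_min *; set D := dot (vsub y u) (vsub z y); set N := nsq (vsub z y).
suff : hp - hz - D / eta <= 0 by lra.
apply: (le0_of_forall_small _ (N / (2 * eta))).
  by apply: Rmult_le_pos; [exact: nsq_ge0|apply/Rlt_le/Rinv_0_lt_compat; lra].
move=> t [t0 t1].
have [hw [hw_def hw_le]] := h_convex z y hz hp t (conj (Rlt_le _ _ t0) t1) hz_def hpu.
have := p_min _ _ hw_def; rewrite !norm_sq.
have -> : vsub (vadd (vscale t z) (vscale (1 - t) y)) u = vadd (vsub y u) (vscale t (vsub z y)).
  by apply: vec_eq => j; rewrite /vsub /vadd /vscale; ring.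
rewrite nsq_add dot_scaler nsq_scale -/D -/N => H.
have -> : D / eta = 2 * D * / (2 * eta) by field; lra.
apply: (Rmult_le_reg_l t); first lra.
rewrite /Rdiv in H *; lra.
Qed.
End Prox.

Section ProxSVRG.
Context {d : nat}.
Context {n : nat} {fs : nat -> Vec d -> R} {gs : nat -> Vec d -> Vec d} {L : R}.
Context {h : Vec d -> option R}.
Hypotheses (n_gt0 : (0 < n)%coq_nat) (L_gt0 : 0 < L).
Hypothesis fs_grad : forall i, (i < n)%coq_nat -> is_gradient (fs i) (gs i).
Hypothesis gs_lip : forall i, (i < n)%coq_nat -> lipschitz_grad L (gs i).
Hypothesis h_convex : convex_fn h.

Let F z := favg n fs z + hval h z.

Lemma dot_gavg x v : dot (gavg n gs x) v = mean n (fun i => dot (gs i x) v).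
Proof.
rewrite /dot mean_sumI; apply: sumI_ext => j.
by rewrite Rmult_comm -mean_scale; apply: mean_ext => i _; ring.
Qed.

Lemma favg_upper_bound x y :
  favg n fs y <= favg n fs x + dot (gavg n gs x) (vsub y x) + L / 2 * nsq (vsub y x).
Proof.
rewrite dot_gavg -(mean_const _ n_gt0 (L / 2 * _)) -!mean_add.
by apply: (mean_le _ n_gt0) => i lt_i_n; apply: smooth_upper_bound; auto.
Qed.

Section Step.
Context {eta : R} {p : Vec d -> Vec d}.
Hypotheses (eta_gt0 : 0 < eta) (p_prox : is_prox h eta p).

(* Add the prox inequalities at [yb] (tested at [x]) and at [y] (tested at [yb]) to the
   descent lemma, and bound [<g - v, y - yb>] by Young's inequality. *)
Lemma prox_step_bound x v : h x = Some (hval h x) ->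
  let y := p (vsub x (vscale eta v)) in
  let yb := p (vsub x (vscale eta (gavg n gs x))) in
  F y <= F x + eta / 2 * nsq (vsub (gavg n gs x) v)
         + (L / 2 - / (2 * eta)) * nsq (vsub y x) - / (2 * eta) * nsq (vsub yb x).
Proof.
move=> x_dom y yb; set g := gavg n gs x in yb *; set A := vsub yb x; set C := vsub y x.
have opt_yb : hval h yb <= hval h x - nsq A / eta - dot g A.
  have := prox_variational eta_gt0 h_convex p_prox (vsub x (vscale eta g)) x_dom; rewrite -/yb.
  have -> : vsub yb (vsub x (vscale eta g)) = vadd A (vscale eta g).
    by apply: vec_eq => j; rewrite /A /vadd /vsub /vscale; ring.
  have -> : vsub x yb = vscale (-1) A by apply: vec_eq => j; rewrite /A /vsub /vscale; ring.
  rewrite dot_scaler dot_addl dot_scalel -/(nsq A).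
  suff -> : -1 * (nsq A + eta * dot g A) / eta = - nsq A / eta - dot g A by lra.
  by field; lra.
have opt_y : hval h y <= hval h yb + (dot C A - nsq C) / eta + dot v A - dot v C.
  have := prox_variational eta_gt0 h_convex p_prox (vsub x (vscale eta v))
            (prox_in_dom p_prox (vsub x (vscale eta g))).
  rewrite -/yb -/y.
  have -> : vsub y (vsub x (vscale eta v)) = vadd C (vscale eta v).
    by apply: vec_eq => j; rewrite /C /vadd /vsub /vscale; ring.
  have -> : vsub yb y = vsub A C by apply: vec_eq => j; rewrite /A /C /vsub; ring.
  rewrite dot_addl dot_scalel (dot_subr C A C) (dot_subr v A C) -/(nsq C).
  suff -> : (dot C A - nsq C + eta * (dot v A - dot v C)) / eta
             = (dot C A - nsq C) / eta + dot v A - dot v C by lra.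
  by field; lra.
have descent := favg_upper_bound x y; rewrite -/g -/C in descent.
have young := dot_young eta (vsub g v) (vsub C A) eta_gt0.
rewrite (nsq_sub C A) (dot_subl g v) (dot_subr g C A) (dot_subr v C A) in young.
rewrite /F /Rdiv in opt_yb opt_y young *.
have inv_eta : / eta = 2 * / (2 * eta) by field; lra.
rewrite inv_eta in opt_yb opt_y young; lra.
Qed.

End Step.

Section Epoch.
Context {rho : R} {m b : nat} {p : Vec d -> Vec d}.
Hypotheses (m_gt0 : (0 < m)%coq_nat) (b_gt0 : (0 < b)%coq_nat).
Hypotheses (rho_gt0 : 0 < rho) (rho_lt_half : rho < 1 / 2).
Hypothesis rho_small : 4 * rho ^ 2 * (INR m) ^ 2 / INR b + rho <= 1.
Hypothesis p_prox : is_prox h (rho / L) p.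

Let eta_gt0 : 0 < rho / L. Proof. exact: Rdiv_lt_0_compat. Qed.
Let b_pos : 0 < INR b. Proof. exact: lt_0_INR. Qed.
Let m_pos : 1 <= INR m. Proof. by apply: (le_INR 1). Qed.

Definition vr_grad (x w : Vec d) (I : list nat) : Vec d :=
  fun j => / INR b * lsum (fun i => gs i x j - gs i w j) I + gavg n gs w j.

Lemma vr_grad_variance x w :
  avg_draws n b (fun I => nsq (vsub (gavg n gs x) (vr_grad x w I)))
  <= L ^ 2 / INR b * nsq (vsub x w).
Proof.
set a := fun i => vsub (gs i x) (gs i w).
rewrite (avg_draws_ext _ n_gt0 _ _ (fun I => nsq (fun j => mean n (fun i => a i j)
                                               - / INR b * lsum (fun i => a i j) I))); last first.
  move=> I _; congr nsq; apply: vec_eq => j.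
  rewrite /vr_grad /a /vsub mean_sub.
  change (gavg n gs x j) with (mean n (fun i => gs i x j)).
  change (gavg n gs w j) with (mean n (fun i => gs i w j)); ring.
apply: Rle_trans (minibatch_nsq_error _ n_gt0 a b b_gt0) _.
have -> : L ^ 2 / INR b * nsq (vsub x w) = / INR b * (L ^ 2 * nsq (vsub x w)) by rewrite /Rdiv; ring.
apply: Rmult_le_compat_l; first exact/Rlt_le/Rinv_0_lt_compat.
rewrite -(mean_const _ n_gt0 (L ^ 2 * _)); apply: (mean_le _ n_gt0) => i lt_i_n.
by apply: nsq_lipschitz; [lra|auto].
Qed.

Definition lyap_coef (k : nat) : R := rho * L / INR b * INR k.

Lemma lyap_coef_ge0 k : 0 <= lyap_coef k.
Proof. by apply: Rmult_le_pos; [apply/Rlt_le/Rdiv_lt_0_compat; nra|apply: pos_INR]. Qed.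

(* This is where the step-size condition on [rho] is used. *)
Lemma lyap_coef_bound k : (k < m)%coq_nat -> lyap_coef k * (1 + 2 * INR m) <= L / (2 * rho) - L / 2.
Proof.
move=> k_lt_m; have := le_INR _ _ k_lt_m; rewrite S_INR => k_le.
have k_pos := pos_INR k.
have rho_small' : 4 * rho ^ 2 * INR m ^ 2 <= INR b * (1 - rho).
  apply: (Rmult_le_reg_r (/ INR b)); first exact: Rinv_0_lt_compat.
  have -> : INR b * (1 - rho) * / INR b = 1 - rho by field; lra.
  by move: rho_small; rewrite /Rdiv; lra.
have k_sq : INR k * (1 + 2 * INR m) <= 2 * INR m ^ 2 by nra.
apply: (Rmult_le_reg_r (2 * rho * INR b)); first nra.
have -> : lyap_coef k * (1 + 2 * INR m) * (2 * rho * INR b)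
          = 2 * rho ^ 2 * L * (INR k * (1 + 2 * INR m)) by rewrite /lyap_coef; field; lra.
have -> : (L / (2 * rho) - L / 2) * (2 * rho * INR b) = L * (INR b * (1 - rho)) by field; lra.
have := Rmult_le_compat_l (2 * rho ^ 2 * L) _ _ ltac:(nra) k_sq; nra.
Qed.

Lemma lyap_coef_succ k : (k <= m)%coq_nat ->
  lyap_coef k * (1 + / (2 * INR m)) + rho * L / (2 * INR b) <= lyap_coef k.+1.
Proof.
move=> k_le_m; have := le_INR _ _ k_le_m => k_le.
rewrite /lyap_coef S_INR.
have -> : rho * L / INR b * INR k * (1 + / (2 * INR m)) + rho * L / (2 * INR b)
          = rho * L / INR b * (INR k + (INR k / INR m + 1) / 2) by field; lra.
apply: Rmult_le_compat_l; first by apply/Rlt_le/Rdiv_lt_0_compat; nra.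
suff : INR k / INR m <= 1 by lra.
by apply: (Rmult_le_reg_r (INR m)); [lra|rewrite /Rdiv Rmult_assoc Rinv_l; lra].
Qed.

Let svrg_next x w I := svrg_step n b gs p (rho / L) x w (gavg n gs w) I.
Let prox_grad x := p (vsub x (vscale (rho / L) (gavg n gs x))).

Lemma svrg_step_descent x w I k : h x = Some (hval h x) -> (k < m)%coq_nat ->
  F (svrg_next x w I) + lyap_coef k * nsq (vsub (svrg_next x w I) w)
  <= F x - L / (2 * rho) * nsq (vsub (prox_grad x) x)
     + lyap_coef k * (1 + / (2 * INR m)) * nsq (vsub x w)
     + rho / L / 2 * nsq (vsub (gavg n gs x) (vr_grad x w I)).
Proof.
move=> x_dom k_lt_m; rewrite /prox_grad; set y := svrg_next x w I.
have := prox_step_bound eta_gt0 p_prox x (vr_grad x w I) x_dom; cbv zeta.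
change (p (vsub x (vscale (rho / L) (vr_grad x w I)))) with y.
have -> : / (2 * (rho / L)) = L / (2 * rho) by field; lra.
have -> : vsub y w = vadd (vsub y x) (vsub x w) by apply: vec_eq => j; rewrite /vadd /vsub; ring.
have := nsq_add_le (2 * INR m) (vsub y x) (vsub x w) ltac:(lra); have := lyap_coef_bound _ k_lt_m.
have := lyap_coef_ge0 k; have := nsq_ge0 (vsub y x).
set c := lyap_coef k; set NC := nsq (vsub y x) => NC0 c0 c_bound dist step.
have := Rmult_le_compat_l c _ _ c0 dist.
have : (L / 2 - L / (2 * rho) + c * (1 + 2 * INR m)) * NC <= 0 by nra.
lra.
Qed.

Let kappa := rho * (1 - 2 * rho) / (2 * L).

Lemma avg_svrg_step_descent x w k : h x = Some (hval h x) -> (k < m)%coq_nat ->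
  kappa * nsq (grad_map n gs p (rho / L) x)
  + avg_draws n b (fun I => F (svrg_next x w I) + lyap_coef k * nsq (vsub (svrg_next x w I) w))
  <= F x + lyap_coef k.+1 * nsq (vsub x w).
Proof.
move=> x_dom k_lt_m; set NA := nsq (vsub (prox_grad x) x); set NE := nsq (vsub x w).
have -> : nsq (grad_map n gs p (rho / L) x) = (L / rho) ^ 2 * NA.
  by rewrite /grad_map nsq_scale nsq_subC; congr (_ * _); field; lra.
apply: Rle_trans (Rplus_le_compat_l _ _ _
  (avg_draws_le _ n_gt0 _ _ _ (fun I _ => svrg_step_descent x w I k x_dom k_lt_m))) _.
rewrite avg_draws_add avg_draws_const // avg_draws_scale -/NA -/NE.
have := vr_grad_variance x w; have := lyap_coef_succ k (Nat.lt_le_incl _ _ k_lt_m).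
have kappa_G : kappa * (L / rho) ^ 2 = L / (2 * rho) - L by rewrite /kappa; field; lra.
move=> coef_succ var; rewrite -/NE in var; rewrite -Rmult_assoc kappa_G.
have E_var : rho / L / 2 * avg_draws n b (fun I => nsq (vsub (gavg n gs x) (vr_grad x w I)))
             <= rho * L / (2 * INR b) * NE.
  apply: Rle_trans (Rmult_le_compat_l _ _ _ _ var) _; first by apply/Rlt_le; lra.
  by right; field; lra.
have := Rmult_le_compat_r NE _ _ (nsq_ge0 _) coef_succ; have := nsq_ge0 (vsub (prox_grad x) x).
rewrite -/NA; nra.
Qed.

Let gm_sq_sum (xs : list (Vec d)) := lsum (fun y => norm (grad_map n gs p (rho / L) y) ^ 2) xs.

(* [C z] stands for the expected future of the algorithm started from [z]. *)
Lemma avg_inner_run_le w (C : Vec d -> R) : (forall z, h z = Some (hval h z) -> C z <= F z) ->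
  forall k x, (k <= m)%coq_nat -> h x = Some (hval h x) ->
  avg_draws n (k * b) (fun l =>
    let r := inner_run n b gs p (rho / L) x w (gavg n gs w) (chunk b k l) in
    kappa * gm_sq_sum r.1 + C r.2)
  <= F x + lyap_coef k * nsq (vsub x w).
Proof.
move=> C_le; elim=> [|k IH] x k_le x_dom.
  by have := C_le x x_dom; rewrite /= /gm_sq_sum /lsum /lyap_coef /= !Rmult_0_r Rmult_0_l; lra.
rewrite mulSn avg_draws_app.
apply: Rle_trans (avg_svrg_step_descent x w k x_dom k_le); rewrite -norm_sq.
rewrite -(avg_draws_const _ n_gt0 b (kappa * _)) -avg_draws_add.
apply: (avg_draws_le _ n_gt0) => l1 l1_b.
have := IH (svrg_next x w l1) (Nat.lt_le_incl _ _ k_le) (prox_in_dom p_prox _).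
move/(Rplus_le_compat_l (kappa * norm (grad_map n gs p (rho / L) x) ^ 2)).
rewrite -(avg_draws_const _ n_gt0 (k * b) (kappa * norm _ ^ 2)) -avg_draws_add; apply: Rle_trans.
right; apply: (avg_draws_ext _ n_gt0) => l2 _.
by rewrite chunk_cons // /gm_sq_sum /lsum /svrg_next /=; ring.
Qed.

Lemma avg_outer_run_le Fstar : (forall z, h z = Some (hval h z) -> Fstar <= F z) ->
  forall S x, h x = Some (hval h x) ->
  avg_draws n (S * m * b) (fun l =>
    kappa * gm_sq_sum (outer_run n b gs p (rho / L) x (chunk m S (chunk b (S * m) l))))
  <= F x - Fstar.
Proof.
move=> Fstar_le; elim=> [|S IH] x x_dom.
  by have := Fstar_le x x_dom; rewrite /= /gm_sq_sum /lsum /= Rmult_0_r; lra.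
set C := fun z => avg_draws n (S * m * b) (fun l =>
  kappa * gm_sq_sum (outer_run n b gs p (rho / L) z (chunk m S (chunk b (S * m) l)))) + Fstar.
have C_le : forall z, h z = Some (hval h z) -> C z <= F z by move=> z /IH; rewrite /C; lra.
have := avg_inner_run_le x C C_le m x (le_n m) x_dom.
have -> : nsq (vsub x x) = 0 by rewrite nsq_sub /nsq; ring.
set r := fun l => inner_run n b gs p (rho / L) x x (gavg n gs x) (chunk b m l).
rewrite Rmult_0_r Rplus_0_r => /(Rplus_le_compat_r (- Fstar)) epoch.
rewrite mulSn mulnDl avg_draws_app; apply: Rle_trans epoch; apply: Req_le.
rewrite -(avg_draws_const _ n_gt0 (m * b) (- Fstar)) -avg_draws_add.
apply: (avg_draws_ext _ n_gt0) => l1 l1_len.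
rewrite (avg_draws_ext _ n_gt0 _ _ (fun l2 => kappa * gm_sq_sum (r l1).1 + kappa * gm_sq_sum
          (outer_run n b gs p (rho / L) (r l1).2 (chunk m S (chunk b (S * m) l2))))).
  by rewrite avg_draws_add avg_draws_const // /C /r; ring.
by move=> l2 _; rewrite chunk_app // chunk_cons ?length_chunk //= /gm_sq_sum lsum_app /r; ring.
Qed.

Lemma expected_sq_gradmap_le Fstar k x :
  (forall z, h z = Some (hval h z) -> Fstar <= F z) -> h x = Some (hval h x) -> (0 < k * m)%N ->
  expected_sq_gradmap n b m (k * m) gs p (rho / L) x <= (F x - Fstar) / (kappa * INR (k * m)).
Proof.
move=> Fstar_le x_dom km_gt0.
have kappa_gt0 : 0 < kappa by rewrite /kappa; apply: Rdiv_lt_0_compat; nra.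
have km_pos : 0 < INR (k * m) by apply: lt_0_INR; lia.
rewrite /expected_sq_gradmap num_epochs_mul; last lia.
rewrite (avg_draws_ext _ n_gt0 _ _ (fun l => / (kappa * INR (k * m)) *
  (kappa * gm_sq_sum (outer_run n b gs p (rho / L) x (chunk m k (chunk b (k * m) l)))))).
  by rewrite avg_draws_scale Rmult_comm; apply: Rmult_le_compat_r (avg_outer_run_le _ Fstar_le k x x_dom);
     apply/Rlt_le/Rinv_0_lt_compat/Rmult_lt_0_compat.
by move=> l _; rewrite /gm_sq_sum /lsum /=; field; lra.
Qed.
End Epoch.
End ProxSVRG.

Theorem theorem5
  (n d : nat) (Hn : (0 < n)%coq_nat) (Hd : (0 < d)%coq_nat)
  (L : R) (HL : 0 < L)
  (fs : nat -> Vec d -> R) (gs : nat -> Vec d -> Vec d)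
  (Hgrad : forall i, (i < n)%coq_nat -> is_gradient (fs i) (gs i))
  (Hsmooth : forall i, (i < n)%coq_nat -> lipschitz_grad L (gs i))
  (h : Vec d -> option R)
  (Hproper : proper_fn h) (Hlsc : lsc_fn h) (Hconv : convex_fn h) (Hcl : closed_dom h)
  (xstar : Vec d) (hstar : R) (Hxstar : h xstar = Some hstar)
  (Hopt : forall y v, h y = Some v -> favg n fs xstar + hstar <= favg n fs y + v)
  (m b T : nat) (Hb1 : (1 <= b)%coq_nat) (Hbn : (b <= n)%coq_nat) (Hm : (1 <= m)%coq_nat)
  (HT : (1 <= T)%coq_nat) (HTm : exists k, T = (k * m)%coq_nat)
  (rho : R) (Hrho0 : 0 < rho) (Hrho1 : rho < 1 / 2)
  (Hrho : 4 * rho ^ 2 * (INR m) ^ 2 / INR b + rho <= 1)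
  (p : Vec d -> Vec d) (Hp : is_prox h (rho / L) p)
  (x0 : Vec d) (h0 : R) (Hx0 : h x0 = Some h0) :
  expected_sq_gradmap n b m T gs p (rho / L) x0
  <= 2 * L * ((favg n fs x0 + h0) - (favg n fs xstar + hstar))
     / (rho * (1 - 2 * rho) * INR T).
Proof.
have [k T_km] := HTm; rewrite -mulnE in T_km; rewrite T_km.
have T_pos : 0 < INR (k * m) by rewrite -T_km; apply: lt_0_INR.
have x0_dom : h x0 = Some (hval h x0) by rewrite /hval Hx0.
have := expected_sq_gradmap_le Hn HL Hgrad Hsmooth Hconv Hm Hb1 Hrho0 Hrho1 Hrho Hp
          _ k x0 (fun z => Hopt z (hval h z)) x0_dom ltac:(rewrite -T_km; lia).
rewrite /hval Hx0 => bound; apply: Rle_trans bound _; right; field; lra.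
Qed.
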